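(* Let $k$ be a field and $O=k\langle z_1,z_2\rangle/(z_2^2z_1,\ z_2z_1^3,\ z_2z_1z_2z_1^2)$, graded with $\deg z_1=\deg z_2=1$. Then the Hilbert series of $O$ is $H_O(t)=\frac{1}{(1-t)^2(1-t^2)(1-t^3)}$.
   Context: The Hilbert series of a graded vector space $M=\bigoplus M_i$ is $H_M(t)=\sum_i(\dim_kM_i)t^i$. *)

From HB Require Import structures.
From mathcomp Require Import all_boot all_order all_algebra.
From mathcomp Require Import finmap.
From mathcomp.multinomials Require Import monalg.

Set Implicit Arguments.
Unset Strict Implicit.
Unset Printing Implicit Defensive.

Import Order.TTheory GRing.Theory Num.Theory.
Local Open Scope ring_scope.

(* The free associative algebra k<z_1, z_2> : the monoid algebra of the free
   monoid on two letters ('I_2; letter 0 is z_1, letter 1 is z_2). *)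
Definition freealg2 (k : fieldType) := {malg k[{fmonom 'I_2}]}.

Definition z1 (k : fieldType) : freealg2 k := << fmu (0 : 'I_2) >>.
Definition z2 (k : fieldType) : freealg2 k := << fmu (1 : 'I_2) >>.

Definition in_ideal2 (A : ringType) (S : seq A) (f : A) : Prop :=
  exists l : seq (A * A * A),
    all (fun t => t.1.2 \in S) l /\ f = \sum_(t <- l) t.1.1 * t.1.2 * t.2.

Definition homog (k : fieldType) (n : nat) (f : freealg2 k) : Prop :=
  forall w : {fmonom 'I_2}, size (w : seq 'I_2) != n -> f@_w = 0.

(* [quot_dim S n d] : the degree-n component of the graded quotient
   k<z_1,z_2> / (S)  (S a list of homogeneous elements) has dimension d over k:
   there are d homogeneous elements of degree n whose classes form a k-basis
   of the degree-n component of the quotient. *)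
Definition quot_dim (k : fieldType) (S : seq (freealg2 k)) (n d : nat) : Prop :=
  exists b : 'I_d -> freealg2 k,
    [/\ forall i, homog n (b i),
        (forall c : 'I_d -> k,
            in_ideal2 S (\sum_i (c i)%:MP * b i) -> forall i, c i = 0) &
        (forall f, homog n f ->
            exists c : 'I_d -> k, in_ideal2 S (f - \sum_i (c i)%:MP * b i))].

Definition O_rels (k : fieldType) : seq (freealg2 k) :=
  [:: z2 k * z2 k * z1 k;
      z2 k * z1 k * z1 k * z1 k;
      z2 k * z1 k * z2 k * z1 k * z1 k].

(* A formal power series h (coefficients h n) equals 1 / p(t) for a
   polynomial p with p(0) = 1, i.e. h * p = 1 as formal power series. *)
Definition series_is_inv (h : nat -> int) (p : {poly int}) : Prop :=
  forall n : nat, \sum_(j < n.+1) p`_j * h (n - j)%N = (n == 0%N)%:R.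

Definition denom_O : {poly int} :=
  (1 - 'X) ^+ 2 * (1 - 'X ^+ 2) * (1 - 'X ^+ 3).

From HB Require Import structures.
From mathcomp Require Import all_boot all_order all_algebra.
From mathcomp Require Import finmap.
From mathcomp.multinomials Require Import monalg.
From mathcomp Require Import ring.

(* The relations of O are monomials, so the classes of the words containing
   none of z2^2z1, z2z1^3, z2z1z2z1^2 as a factor (the normal words) form a
   basis of O, and dim O_n is the number of normal words of length n.
   Every normal word factors uniquely as z1^a (z2z1^2)^b (z2z1)^c z2^d.
   Sorting the words by whether they start with z1, then with z2z1^2, then
   with z2z1 shows that multiplying the generating series of the normal words
   successively by 1-t, 1-t^3 and 1-t^2 leaves that of the words z2^d, which
   is 1/(1-t). *)

Set Implicit Arguments.
Unset Strict Implicit.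
Unset Printing Implicit Defensive.
Import GRing.Theory.
Local Open Scope ring_scope.

Section Words.
Variable I : finType.
Implicit Types (u v w : seq I) (P : pred (seq I)).

Fixpoint words n : seq (seq I) :=
  if n is m.+1 then [seq x :: w | x <- enum I, w <- words m] else [:: [::]].

Lemma mem_words n w : (w \in words n) = (size w == n).
Proof.
elim: n w => [|n IHn] [|x w] //=.
  by apply/allpairsP => -[[y v] [_ _]].
apply/allpairsP/idP => [[[y v] [_ /= + [_ ->]]]|]; first by rewrite IHn.
by rewrite eqSS => sz_w; exists (x, w); rewrite mem_enum IHn.
Qed.

Lemma words_uniq n : uniq (words n).
Proof.
elim: n => //= n IHn; apply: allpairs_uniq; rewrite ?enum_uniq //.
by move=> [x v] [y w] _ _ /= [-> ->].
Qed.

Lemma count_words_prefix u P n :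
  count P (words (size u + n)) =
  (count (fun v => P (u ++ v)) (words n) +
   count (fun w => ~~ prefix u w && P w) (words (size u + n)))%N.
Proof.
have cat_inj : injective (cat u) by elim: u => // x u IHu v w [/IHu].
have prefix_words : perm_eq (filter (prefix u) (words (size u + n)))
                            (map (cat u) (words n)).
  apply: uniq_perm; rewrite ?filter_uniq ?map_inj_uniq ?words_uniq // => w.
  rewrite mem_filter mem_words; apply/andP/mapP => [[/prefixP[v ->]]|[v]].
    by rewrite size_cat eqn_add2l -mem_words; exists v.
  by rewrite mem_words => /eqP sz_v ->; rewrite prefix_prefix size_cat sz_v.
rewrite -size_filter -(count_predC (prefix u)) !count_filter; congr (_ + _)%N.
rewrite -(count_map (cat u)) -(permP prefix_words) count_filter.
by apply: eq_count => w; rewrite /= andbC.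
Qed.

Lemma count_words_short_prefix u P n : (n < size u)%N ->
  count (fun w => ~~ prefix u w && P w) (words n) = count P (words n).
Proof.
move=> lt_n_u; apply: eq_in_count => w; rewrite mem_words => /eqP sz_w.
case: prefixP => [[v w_eq]|//].
by move: lt_n_u; rewrite -sz_w w_eq size_cat ltnNge leq_addr.
Qed.

Lemma count_words_nseq x n :
  count (fun w => w == nseq (size w) x) (words n) = 1%N.
Proof.
have <- : count_mem (nseq n x) (words n) = 1%N.
  by rewrite count_uniq_mem ?words_uniq // mem_words size_nseq eqxx.
by apply: eq_in_count => w; rewrite mem_words => /eqP ->.
Qed.

End Words.

Arguments count_words_short_prefix {I} u P {n}.

Section NormalWords.
Variable I : eqType.
Implicit Types (rels : seq (seq I)) (w : seq I).

Definition normal_word rels w : bool := all (fun r => ~~ infix r w) rels.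

Lemma normal_word_cons rels x w :
  normal_word rels (x :: w) =
  all (fun r => ~~ prefix r (x :: w)) rels && normal_word rels w.
Proof. by rewrite /normal_word -all_predI; apply: eq_all => r /=; rewrite negb_or. Qed.

End NormalWords.

Section TwoSidedIdeal.
Variables (A : ringType) (S : seq A).

Lemma in_ideal2_0 : in_ideal2 S 0.
Proof. by exists [::]; rewrite big_nil. Qed.

Lemma in_ideal2D f g : in_ideal2 S f -> in_ideal2 S g -> in_ideal2 S (f + g).
Proof.
move=> [l [Sl ->]] [l' [Sl' ->]]; exists (l ++ l').
by rewrite all_cat Sl Sl' big_cat.
Qed.

Lemma in_ideal2_gen a s b : s \in S -> in_ideal2 S (a * s * b).
Proof. by move=> Ss; exists [:: (a, s, b)]; rewrite /= Ss big_seq1. Qed.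

End TwoSidedIdeal.

Section MonomialIdeals.
Variables (R : ringType) (I : choiceType).
Implicit Types (rels : seq (seq I)) (f a b : {malg R[{fmonom I}]}).

Definition monomials rels : seq {malg R[{fmonom I}]} :=
  [seq << FMonom r >> | r <- rels].

Lemma malgMU (m1 m2 : {fmonom I}) :
  << m1 >> * << m2 >> = << FMonom (m1 ++ m2) >> :> {malg R[{fmonom I}]}.
Proof. by rewrite malgM_def fgmulUU mulr1 -fmM fmK. Qed.

Lemma mcoeff_mulU_notinfix a b (r : seq I) (m : {fmonom I}) :
  ~~ infix r m -> (a * << FMonom r >> * b)@_m = 0.
Proof.
move=> r_m; rewrite mcoeffMl big1 // => m1 _; rewrite big1 // => m2 _.
case: eqP => [m_eq|]; last by rewrite mulr0n.
rewrite mcoeffMl big1 ?mul0r ?mul0rn // => m3 _; rewrite big1 // => m4 _.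
rewrite mcoeffU1; case: eqP => [r_eq|]; last by rewrite mulr0 mul0rn.
case: eqP => [m34_eq|]; last by rewrite mulr0n.
case/negP: r_m; rewrite -m_eq -m34_eq -r_eq !fmM /=.
exact: infix_trans (suffix_infix m3 r) (prefix_infix _ m2).
Qed.

Lemma in_monomial_idealP rels f :
  in_ideal2 (monomials rels) f <->
  (forall m : {fmonom I}, normal_word rels m -> f@_m = 0).
Proof.
split=> [[l [/allP rels_l ->]] m normal_m|f_normal].
  rewrite raddf_sum big1_seq //= => t /rels_l /mapP[r r_rels t_eq].
  by rewrite t_eq mcoeff_mulU_notinfix // (allP normal_m).
rewrite (monalgE f) big_seq.
apply: big_ind => [|g h|m _]; [exact: in_ideal2_0 | exact: in_ideal2D |].
have [normal_m|] := boolP (normal_word rels m).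
  have -> : << f@_m *g m >> = 0 by rewrite f_normal // monalgU0.
  exact: in_ideal2_0.
rewrite -has_predC => /hasP[r r_rels /negPn /infixP[u [v m_eq]]].
have -> : << f@_m *g m >> =
          (f@_m)%:MP * << FMonom u >> * << FMonom r >> * << FMonom v >>.
  have -> : << f@_m *g m >> = (f@_m)%:MP * << m >>.
    by apply/malgP => m'; rewrite mcoeffCM !mcoeffU mulr_natr.
  by rewrite -!mulrA !malgMU; congr (_ * << _ >>); apply: val_inj; rewrite /= m_eq.
by apply: in_ideal2_gen; apply: map_f.
Qed.

End MonomialIdeals.

Section MonomialCombinations.
Variables (R : ringType) (K : monomType) (d : nat) (mon : 'I_d -> K).
Implicit Types (c : 'I_d -> R) (m : K).

Lemma mcoeff_sumU c m :
  (\sum_i (c i)%:MP * << mon i >> : {malg R[K]})@_m = \sum_i c i * (mon i == m)%:R.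
Proof. by rewrite raddf_sum; apply: eq_bigr => i _ /=; rewrite mcoeffCM mcoeffU1. Qed.

Lemma mcoeff_sumU_mon c j : injective mon ->
  (\sum_i (c i)%:MP * << mon i >> : {malg R[K]})@_(mon j) = c j.
Proof.
move=> mon_inj; rewrite mcoeff_sumU (bigD1 j) //= eqxx mulr1 big1 ?addr0 // => i ij.
by rewrite (inj_eq mon_inj) (negbTE ij) mulr0.
Qed.

Lemma mcoeff_sumU_notin c m : (forall i, mon i != m) ->
  (\sum_i (c i)%:MP * << mon i >> : {malg R[K]})@_m = 0.
Proof. by move=> mon_m; rewrite mcoeff_sumU big1 // => i _; rewrite (negbTE (mon_m i)) mulr0. Qed.

End MonomialCombinations.

Lemma quot_dim_monomial (k : fieldType) (rels : seq (seq 'I_2)) n :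
  quot_dim (monomials k rels) n (count (normal_word rels) (words 'I_2 n)).
Proof.
rewrite -size_filter; set L := filter _ _.
have memL w : (w \in L) = normal_word rels w && (size w == n).
  by rewrite mem_filter mem_words.
pose mL (i : 'I_(size L)) : {fmonom 'I_2} := FMonom (nth [::] L i).
have mL_normal i : normal_word rels (mL i) && (size (mL i) == n).
  by rewrite -memL mem_nth.
have mL_inj : injective mL.
  move=> i j [] /eqP; rewrite nth_uniq ?filter_uniq ?words_uniq //.
  by move/eqP/val_inj.
exists (fun i => << mL i >>); split.
- move=> i w w_n; rewrite mcoeffU1; case: eqP => // mL_w.
  by move: w_n; rewrite -mL_w; case/andP: (mL_normal i) => _ ->.
- move=> c /in_monomial_idealP comb_normal i.
  rewrite -(mcoeff_sumU_mon c i mL_inj) comb_normal //.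
  by case/andP: (mL_normal i).
move=> f f_n; exists (fun i => f@_(mL i)); apply/in_monomial_idealP => m normal_m.
rewrite mcoeffB; have [m_L|m_L] := boolP ((m : seq 'I_2) \in L).
  have -> : m = mL (Ordinal (etrans (index_mem _ _) m_L)).
    by rewrite /mL /= nth_index // fmK.
  by rewrite mcoeff_sumU_mon // subrr.
have m_n : size m != n by rewrite memL normal_m in m_L.
rewrite f_n // mcoeff_sumU_notin ?subr0 // => i.
by apply: contraNneq m_L => <-; rewrite memL.
Qed.

Definition series_mul (p : {poly int}) (h : nat -> int) (n : nat) : int :=
  \sum_(j < n.+1) p`_j * h (n - j)%N.

Lemma series_mulE p h N n : (n <= N)%N ->
  series_mul p h n = (p * \poly_(i < N.+1) h i)`_n.
Proof.
move=> le_nN; rewrite coefM; apply: eq_bigr => j _.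
by rewrite coef_poly ltnS (leq_trans (leq_subr _ _) le_nN).
Qed.

Lemma eq_series_mul p h g : h =1 g -> series_mul p h =1 series_mul p g.
Proof. by move=> eq_hg n; apply: eq_bigr => j _; rewrite eq_hg. Qed.

Lemma series_mulM p q h n :
  series_mul (p * q) h n = series_mul q (series_mul p h) n.
Proof.
rewrite (series_mulE _ _ (leqnn n)) -mulrA mulrCA coefM.
by apply: eq_bigr => j _; rewrite -series_mulE ?leq_subr.
Qed.

Lemma series_is_invM p q h g :
  series_mul p h =1 g -> series_is_inv g q -> series_is_inv h (p * q).
Proof.
move=> ph_g q_inv n; rewrite -[LHS]/(series_mul _ _ _) series_mulM.
by rewrite (eq_series_mul _ ph_g); apply: q_inv.
Qed.

Lemma series_mul_1subXn m h g :
    (forall n, (n < m)%N -> h n = g n) ->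
    (forall n, h (m + n)%N = g (m + n)%N + h n) ->
  series_mul (1 - 'X^m) h =1 g.
Proof.
move=> h_small h_rec n; rewrite (series_mulE _ _ (leqnn n)) mulrBl mul1r coefB.
rewrite coefXnM coef_poly ltnSn; case: ltnP => [/h_small -> | le_mn].
  by rewrite subr0.
by rewrite coef_poly ltnS leq_subr -{1}(subnKC le_mn) h_rec addrK subnKC.
Qed.

Lemma series_is_inv_1subX : series_is_inv (fun=> 1) (1 - 'X).
Proof. by apply: (series_mul_1subXn (m := 1)) => [[] | n]; rewrite ?add0r. Qed.

Definition x1 : 'I_2 := 0.
Definition x2 : 'I_2 := 1.

Lemma letterP (x : 'I_2) : x = x1 \/ x = x2.
Proof. by case: x => -[|[|//]] lt_x2; [left | right]; apply: val_inj. Qed.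

Definition O_words : seq (seq 'I_2) :=
  [:: [:: x2; x2; x1]; [:: x2; x1; x1; x1]; [:: x2; x1; x2; x1; x1]].

Lemma O_relsE (k : fieldType) : O_rels k = monomials k O_words.
Proof. by rewrite /O_rels /z1 /z2 !fmuE; congr [:: _; _; _]; rewrite !malgMU. Qed.

Notation normal_O := (normal_word O_words).

(* In the factorisation z1^a (z2z1^2)^b (z2z1)^c z2^d of a normal word,
   normal_O_a0 selects a = 0 and normal_O_ab0 selects a = b = 0. *)
Definition normal_O_a0 (w : seq 'I_2) := ~~ prefix [:: x1] w && normal_O w.
Definition normal_O_ab0 (w : seq 'I_2) :=
  ~~ prefix [:: x2; x1; x1] w && normal_O_a0 w.

Lemma normal_O_x1 w : normal_O (x1 :: w) = normal_O w.
Proof. by rewrite normal_word_cons. Qed.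

Lemma normal_O_x2x2 w : normal_O [:: x2, x2 & w] = (w == nseq (size w) x2).
Proof.
elim: w => [|x w IHw] //; case: (letterP x) => ->.
  by rewrite normal_word_cons /= ?prefix0s ?eqseq_cons.
by rewrite normal_word_cons IHw eqseq_cons.
Qed.

Lemma normal_O_a0_x2x1x1 w : normal_O_a0 [:: x2, x1, x1 & w] = normal_O_a0 w.
Proof.
rewrite /normal_O_a0 !normal_word_cons /=.
by case: w => [|x w] //; case: (letterP x) => -> //=; rewrite prefix0s.
Qed.

Lemma normal_O_ab0_x2x1 w : normal_O_ab0 [:: x2, x1 & w] = normal_O_ab0 w.
Proof.
rewrite /normal_O_ab0 /normal_O_a0 !normal_word_cons /=.
by case: w => [|x w] //; case: (letterP x) => -> //=; rewrite ?prefix0s ?andbT.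
Qed.

Lemma normal_O_ab0_nseq w :
  ~~ prefix [:: x2; x1] w && normal_O_ab0 w = (w == nseq (size w) x2).
Proof.
case: w => [|x [|y w]] //; case: (letterP x) => -> //.
case: (letterP y) => -> /=; rewrite ?prefix0s //.
by rewrite /normal_O_ab0 /normal_O_a0 normal_O_x2x2 !eqseq_cons.
Qed.

Definition nwords (P : pred (seq 'I_2)) (n : nat) : int :=
  (count P (words 'I_2 n))%:Z.

Lemma series_mul_normal_O :
  series_mul (1 - 'X) (nwords normal_O) =1 nwords normal_O_a0.
Proof.
apply: (series_mul_1subXn (m := 1)) => [n lt_n1 | n]; rewrite /nwords.
  by rewrite -(count_words_short_prefix [:: x1] _ lt_n1).
by rewrite (count_words_prefix [:: x1]) (eq_count normal_O_x1) PoszD addrC.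
Qed.

Lemma series_mul_normal_O_a0 :
  series_mul (1 - 'X^3) (nwords normal_O_a0) =1 nwords normal_O_ab0.
Proof.
apply: series_mul_1subXn => [n lt_n3 | n]; rewrite /nwords.
  by rewrite -(count_words_short_prefix [:: x2; x1; x1] _ lt_n3).
rewrite (count_words_prefix [:: x2; x1; x1]) (eq_count normal_O_a0_x2x1x1).
by rewrite PoszD addrC.
Qed.

Lemma series_mul_normal_O_ab0 :
  series_mul (1 - 'X^2) (nwords normal_O_ab0) =1 fun=> 1.
Proof.
apply: series_mul_1subXn => [n lt_n2 | n]; rewrite /nwords.
  rewrite -(count_words_short_prefix [:: x2; x1] _ lt_n2).
  by rewrite (eq_count normal_O_ab0_nseq) count_words_nseq.
rewrite (count_words_prefix [:: x2; x1]) (eq_count normal_O_ab0_x2x1).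
by rewrite (eq_count normal_O_ab0_nseq) count_words_nseq PoszD addrC.
Qed.

Theorem lemma7p3 (k : fieldType) :
  exists h : nat -> nat,
    (forall n, quot_dim (O_rels k) n (h n)) /\
    series_is_inv (fun n => (h n)%:Z) denom_O.
Proof.
exists (fun n => count normal_O (words 'I_2 n)); split=> [n|].
  by rewrite O_relsE; apply: quot_dim_monomial.
have -> : denom_O = (1 - 'X) * ((1 - 'X^3) * ((1 - 'X^2) * (1 - 'X))).
  by rewrite /denom_O; ring.
apply: (series_is_invM series_mul_normal_O).
apply: (series_is_invM series_mul_normal_O_a0).
exact: (series_is_invM series_mul_normal_O_ab0 series_is_inv_1subX).
Qed.
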